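(* Let $M\ge2$ and let $\mathcal{P}$ be a convex Class I source set on $\{1,\dots,M\}$ (so $\mathcal{P}$ contains the uniform distribution). Then for $D\in[0,1]$, \[ \epsilon^*_{\mathrm{IT}}(\mathcal{P},D)=\begin{cases}\log M-H(D)-D\log(M-1), & D<\frac{M-1}{M},\\ 0, & D\ge\frac{M-1}{M},\end{cases} \] where $H(D)=-D\log D-(1-D)\log(1-D)$ is the binary entropy function.
   Context: A source set is a nonempty set $\mathcal{P}$ of probability distributions on $\{1,\dots,M\}$; it is Class I if its convex hull contains the uniform distribution $(1/M,\dots,1/M)$. A mechanism is an $M\times M$ row-stochastic matrix $Q$ with entries $Q(j|i)$; its diagonal distortions are $D_i=1-Q(i|i)$. $Q$ is $(\mathcal{P},D)$-valid if $\sum_iP_iD_i\le D$ for all $P\in\mathcal{P}$ (average Hamming distortion); $\mathcal{Q}(\mathcal{P},D)$ is the set of these. For a source distribution $P$ and mechanism $Q$, $I(P;Q)$ is the mutual information $I(X;\hat X)$ when $X\sim P$ and $\hat X$ is drawn from $Q(\cdot|X)$. The worst-case information-theoretic leakage is $\epsilon_{\mathrm{IT}}(Q)=\max_{P\in\mathcal{P}}I(P;Q)$ and $\epsilon^*_{\mathrm{IT}}(\mathcal{P},D)=\min_{Q\in\mathcal{Q}(\mathcal{P},D)}\epsilon_{\mathrm{IT}}(Q)$. *)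

From HB Require Import structures.
From mathcomp Require Import all_boot all_order all_algebra.
From mathcomp Require Import all_classical all_reals all_analysis.
Set Implicit Arguments. Unset Strict Implicit. Unset Printing Implicit Defensive.
Import Order.TTheory GRing.Theory Num.Theory.
Local Open Scope classical_set_scope.
Local Open Scope ring_scope.

Section Leakage.
Variables (R : realType) (M : nat).

Definition is_distr (P : 'I_M -> R) : Prop :=
  (forall i, 0 <= P i) /\ \sum_(i < M) P i = 1.

Definition uniform_distr : 'I_M -> R := fun _ => M%:R^-1.

Definition source_set (S : set ('I_M -> R)) : Prop :=
  S !=set0 /\ (forall P, S P -> is_distr P).

Definition convex_source (S : set ('I_M -> R)) : Prop :=
  forall P1 P2 (t : R), S P1 -> S P2 -> 0 <= t <= 1 ->
    S (fun i => t * P1 i + (1 - t) * P2 i).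

(* uniform distribution lies in the convex hull of S *)
Definition class_I (S : set ('I_M -> R)) : Prop :=
  exists (n : nat) (p : 'I_n -> 'I_M -> R) (w : 'I_n -> R),
    (forall k, S (p k)) /\ (forall k, 0 <= w k) /\ \sum_(k < n) w k = 1 /\
    (forall i, \sum_(k < n) w k * p k i = uniform_distr i).

(* mechanism: Q i j = Q(j|i), row-stochastic *)
Definition mechanism (Q : 'M[R]_M) : Prop :=
  (forall i j, 0 <= Q i j) /\ (forall i, \sum_(j < M) Q i j = 1).

Definition diag_distortion (Q : 'M[R]_M) (i : 'I_M) : R := 1 - Q i i.

Definition valid (S : set ('I_M -> R)) (D : R) (Q : 'M[R]_M) : Prop :=
  mechanism Q /\
  forall P, S P -> \sum_(i < M) P i * diag_distortion Q i <= D.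

Definition out_marg (P : 'I_M -> R) (Q : 'M[R]_M) (j : 'I_M) : R :=
  \sum_(k < M) P k * Q k j.

(* mutual information I(X; Xhat), natural log, convention 0 log(.) = 0 *)
Definition mutual_info (P : 'I_M -> R) (Q : 'M[R]_M) : R :=
  \sum_(i < M) \sum_(j < M)
     (if P i * Q i j == 0 then 0
      else P i * Q i j * ln (Q i j / out_marg P Q j)).

(* worst-case leakage  max_{P in S} I(P;Q)  (taken as a supremum) *)
Definition eps_IT (S : set ('I_M -> R)) (Q : 'M[R]_M) : R :=
  sup [set mutual_info P Q | P in S].

End Leakage.

Definition binary_entropy (R : realType) (D : R) : R :=
  - (D * ln D) - (1 - D) * ln (1 - D).

From mathcomp Require Import all_boot all_order all_algebra.
From mathcomp Require Import all_classical all_reals all_analysis.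
From mathcomp Require Import ring lra.
Set Implicit Arguments.
Unset Strict Implicit.
Unset Printing Implicit Defensive.
Import Order.TTheory GRing.Theory Num.Theory.
Local Open Scope classical_set_scope.
Local Open Scope ring_scope.

(* The uniform input lies in the convex Class I source set, and a mechanism
   whose distortion on it is at most D has average diagonal s >= 1 - D.  Gibbs'
   inequality against the reference law m_j c_ij, where m is the output law and
   c the symmetric channel with diagonal a = 1 - D and off-diagonal
   b = D/(M-1), gives Fano's bound I >= ln M + ln b + s (ln a - ln b), i.e. the
   leakage is at least ln M - H(D) - D ln(M-1).  Conversely, for that symmetric
   channel the distortion is exactly D for every source and the leakage
   H(output) - H(row) is largest at the uniform input, where it equals the bound.
   Beyond D = (M-1)/M the constant channel leaks nothing. *)

Section Gibbs.
Variable R : realType.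

Lemma ln_le_subr1 (x : R) : 0 < x -> ln x <= x - 1.
Proof. by move=> x0; have := expR_ge1Dx (ln x); rewrite lnK ?posrE //; lra. Qed.

Lemma gibbs_term (p q : R) : 0 <= p -> 0 <= q -> (0 < p -> 0 < q) ->
  p * ln q - p * ln p <= q - p.
Proof.
move=> p0 q0 pq; have [->|pne] := eqVneq p 0; first by rewrite !mul0r !subr0.
have pp : 0 < p by rewrite lt0r pne.
have qp := pq pp.
rewrite -mulrBr -ln_div ?posrE //.
have := ler_wpM2l (ltW pp) (ln_le_subr1 (divr_gt0 qp pp)).
by rewrite mulrBr mulr1 mulrCA mulfV ?mulr1 ?gt_eqF.
Qed.

Lemma entropy_le_ln_card (T : finType) (m : T -> R) :
  (forall x, 0 <= m x) -> \sum_x m x = 1 -> - \sum_x m x * ln (m x) <= ln #|T|%:R.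
Proof.
move=> m0 m1.
have T0 : (0 < #|T|)%N.
  rewrite lt0n; apply: contra_eq_neq m1 => T0.
  rewrite big_pred0 ?(eq_sym 0) ?oner_eq0 // => x.
  by have := card0_eq T0 x; rewrite !inE.
have Tp : 0 < (#|T|%:R : R) by rewrite ltr0n.
have : \sum_x (m x * ln #|T|%:R^-1 - m x * ln (m x)) <= \sum_x (#|T|%:R^-1 - m x).
  apply: ler_sum => x _; apply: gibbs_term => //.
  by rewrite invr_gt0.
rewrite !sumrB -big_distrl /= m1 mul1r sumr_const -[_^-1 *+ _]mulr_natr mulVf ?gt_eqF //.
by rewrite lnV ?posrE //; lra.
Qed.

End Gibbs.

Section MutualInformation.
Variables (R : realType) (M : nat).
Implicit Types (P : 'I_M -> R) (Q : 'M[R]_M).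
Local Notation U := (uniform_distr R (M:=M)).

Lemma out_marg_ge0 P Q j : is_distr P -> mechanism Q -> 0 <= out_marg P Q j.
Proof. by case=> P0 _ [Q0 _]; apply: sumr_ge0 => k _; apply: mulr_ge0. Qed.

Lemma out_marg_ge P Q i j : is_distr P -> mechanism Q -> P i * Q i j <= out_marg P Q j.
Proof.
case=> P0 _ [Q0 _]; rewrite /out_marg (bigD1 i) //= lerDl.
by apply: sumr_ge0 => k _; apply: mulr_ge0.
Qed.

Lemma sum_out_marg P Q : is_distr P -> mechanism Q -> \sum_j out_marg P Q j = 1.
Proof.
case=> _ P1 [_ Q1]; rewrite /out_marg exchange_big /= -{}P1.
by apply: eq_bigr => k _; rewrite -mulr_sumr Q1 mulr1.
Qed.

Lemma sum_joint P Q : is_distr P -> mechanism Q -> \sum_i \sum_j P i * Q i j = 1.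
Proof. by case=> _ <- [_ Q1]; apply: eq_bigr => i _; rewrite -mulr_sumr Q1 mulr1. Qed.

Lemma mutual_infoE P Q : mutual_info P Q =
  \sum_i \sum_j P i * Q i j * ln (Q i j / out_marg P Q j).
Proof.
by apply: eq_bigr => i _; apply: eq_bigr => j _; case: eqP => [->|]; rewrite ?mul0r.
Qed.

Lemma joint_gt0 P Q i j : is_distr P -> mechanism Q -> P i * Q i j != 0 ->
  [/\ 0 < P i, 0 < Q i j & 0 < out_marg P Q j].
Proof.
move=> dP mQ ne; have [[P0 _] [Q0 _]] := (dP, mQ).
have pos : 0 < P i * Q i j by rewrite lt0r ne mulr_ge0.
split; last exact: lt_le_trans pos (out_marg_ge i j dP mQ).
  by rewrite lt0r P0 andbT; apply: contra ne => /eqP ->; rewrite mul0r.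
by rewrite lt0r Q0 andbT; apply: contra ne => /eqP ->; rewrite mulr0.
Qed.

Lemma mutual_info_entropyE P Q : is_distr P -> mechanism Q ->
  mutual_info P Q = \sum_i P i * (\sum_j Q i j * ln (Q i j))
     - \sum_j out_marg P Q j * ln (out_marg P Q j).
Proof.
move=> dP mQ; rewrite mutual_infoE.
have -> : \sum_j out_marg P Q j * ln (out_marg P Q j) =
   \sum_i \sum_j P i * Q i j * ln (out_marg P Q j).
  by rewrite exchange_big /=; apply: eq_bigr => j _; rewrite /out_marg big_distrl.
rewrite -sumrB; apply: eq_bigr => i _; rewrite mulr_sumr -sumrB.
apply: eq_bigr => j _; rewrite mulrA -mulrBr.
have [->|/joint_gt0[] // _ Qp mp] := eqVneq (P i * Q i j) 0; first by rewrite !mul0r.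
by rewrite ln_div ?posrE.
Qed.

Lemma mechanism_le1 Q i j : mechanism Q -> Q i j <= 1.
Proof. by case=> Q0 Q1; rewrite -(Q1 i) (bigD1 j) //= lerDl sumr_ge0. Qed.

Lemma mechanism_offdiag_eq0 Q i j : mechanism Q -> Q i i = 1 -> j != i -> Q i j = 0.
Proof.
case=> Q0 Q1 Qii ji; apply/eqP; rewrite eq_le Q0 andbT.
have := Q1 i; rewrite (bigD1 i) //= (bigD1 j) //= Qii.
have : 0 <= \sum_(k | (k != i) && (k != j)) Q i k by apply: sumr_ge0.
lra.
Qed.

Lemma row_entropy_le0 Q i : mechanism Q -> \sum_j Q i j * ln (Q i j) <= 0.
Proof.
move=> mQ; apply: sumr_le0 => j _; apply: mulr_ge0_le0; first by case: mQ.
exact/ln_le0/mechanism_le1.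
Qed.

Lemma mutual_info_le_ln P Q : is_distr P -> mechanism Q -> mutual_info P Q <= ln M%:R.
Proof.
move=> dP mQ; rewrite mutual_info_entropyE //.
have := entropy_le_ln_card (fun j => out_marg_ge0 j dP mQ) (sum_out_marg dP mQ).
rewrite card_ord; suff : \sum_i P i * (\sum_j Q i j * ln (Q i j)) <= 0 by lra.
apply: sumr_le0 => i _; apply: mulr_ge0_le0; [by case: dP | exact: row_entropy_le0].
Qed.

Lemma mutual_info_ge_cross P Q (c : 'I_M -> 'I_M -> R) :
  is_distr P -> mechanism Q -> (forall i j, 0 <= c i j) -> (forall j, \sum_i c i j = 1) ->
  (forall i j, 0 < P i * Q i j -> 0 < c i j) ->
  \sum_i \sum_j P i * Q i j * ln (c i j / P i) <= mutual_info P Q.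
Proof.
move=> dP mQ c0 c1 cpos; have [[P0 _] [Q0 _]] := (dP, mQ).
have gibbs i j : P i * Q i j * ln (c i j / P i) - P i * Q i j * ln (Q i j / out_marg P Q j)
    <= out_marg P Q j * c i j - P i * Q i j.
  have [->|ne] := eqVneq (P i * Q i j) 0.
    by rewrite !mul0r !subr0 mulr_ge0 ?out_marg_ge0.
  have [Pp Qp mp] := joint_gt0 dP mQ ne.
  have cp : 0 < c i j by apply: cpos; rewrite lt0r ne mulr_ge0.
  have Ec : ln (c i j / P i) - ln (Q i j / out_marg P Q j) =
            ln (out_marg P Q j * c i j) - ln (P i * Q i j).
    by rewrite !ln_div ?lnM ?posrE //; ring.
  rewrite -mulrBr {}Ec mulrBr; apply: gibbs_term => [||_]; rewrite ?mulr_ge0 ?out_marg_ge0 //.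
  exact: mulr_gt0.
have : \sum_i \sum_j (P i * Q i j * ln (c i j / P i)
                      - P i * Q i j * ln (Q i j / out_marg P Q j))
    <= \sum_i \sum_j (out_marg P Q j * c i j - P i * Q i j).
  by apply: ler_sum => i _; apply: ler_sum => j _; apply: gibbs.
have -> : \sum_i \sum_j (out_marg P Q j * c i j - P i * Q i j) = 0.
  under eq_bigr do rewrite sumrB.
  rewrite sumrB exchange_big /= sum_joint // -(sum_out_marg dP mQ) -sumrB.
  by apply: big1 => j _; rewrite -mulr_sumr c1 mulr1 subrr.
under eq_bigr do rewrite sumrB.
by rewrite sumrB subr_le0 -mutual_infoE.
Qed.

Lemma mutual_info_ge0 P Q : is_distr P -> mechanism Q -> 0 <= mutual_info P Q.
Proof.
move=> dP mQ; have [P0 P1] := dP.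
have Ppos i j : 0 < P i * Q i j -> 0 < P i by move/lt0r_neq0/(joint_gt0 dP mQ) => [].
apply: le_trans (mutual_info_ge_cross dP mQ (fun i _ => P0 i) (fun _ => P1) Ppos).
rewrite big1 // => i _; rewrite big1 // => j _.
have [->|/(joint_gt0 dP mQ)[Pp _ _]] := eqVneq (P i * Q i j) 0; first by rewrite mul0r.
by rewrite divff ?gt_eqF // ln1 mulr0.
Qed.

Lemma uniform_distrP : (0 < M)%N -> is_distr U.
Proof.
move=> M0; split=> [i|]; first by rewrite /uniform_distr invr_ge0 ler0n.
by rewrite sumr_const card_ord -[_ *+ M]mulr_natr mulVf ?pnatr_eq0 -?lt0n.
Qed.

Lemma diag_avg_ge1 Q i : mechanism Q -> 1 <= \sum_k U k * Q k k -> Q i i = 1.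
Proof.
move=> mQ diag1; have M0 : (0 < M)%N := leq_ltn_trans (leq0n i) (ltn_ord i).
have [_ U1] := uniform_distrP M0.
have U0 k : 0 < U k by rewrite invr_gt0 ltr0n.
have gap k : 0 <= U k * (1 - Q k k) by rewrite mulr_ge0 ?subr_ge0 ?mechanism_le1 // ltW.
have gap_sum : \sum_k U k * (1 - Q k k) = 0.
  apply/le_anti; rewrite sumr_ge0 // andbT.
  under eq_bigr do rewrite mulrBr mulr1.
  by rewrite sumrB U1 subr_le0.
have := psumr_eq0P (P := xpredT) (fun k _ => gap k) gap_sum (i := i) isT.
by move/eqP; rewrite mulf_eq0 (gt_eqF (U0 i)) subr_eq0 => /eqP <-.
Qed.

End MutualInformation.

Section SourceSets.
Variables (R : realType) (M : nat).
Implicit Types (S : set ('I_M -> R)) (Q : 'M[R]_M).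
Local Notation U := (uniform_distr R (M:=M)).

Lemma convex_source_sum S n (p : 'I_n -> 'I_M -> R) (w : 'I_n -> R) :
  convex_source S -> (forall k, S (p k)) -> (forall k, 0 <= w k) -> \sum_k w k = 1 ->
  S (fun i => \sum_k w k * p k i).
Proof.
move=> cS; elim: n p w => [|n IH] p w Sp w0.
  by rewrite big_ord0 => /eqP; rewrite eq_sym oner_eq0.
rewrite big_ord_recr /=; set t := w ord_max => w1.
pose w' k := w (widen_ord (leqnSn n) k).
have sum_w' : \sum_k w' k = 1 - t by rewrite -w1 addrK.
have [t1|t1] := eqVneq t 1.
  have w'_eq0 k : w' k = 0.
    by apply: (psumr_eq0P (P := xpredT) (F := w') (fun k _ => w0 _)); rewrite // sum_w' t1 subrr.
  rewrite (_ : (fun i => _) = p ord_max) //; apply: funext => i.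
  by rewrite big_ord_recr /= big1 ?add0r -/t ?t1 ?mul1r // => k _; rewrite -/(w' k) w'_eq0 mul0r.
have t'0 : 0 < 1 - t.
  by rewrite lt0r subr_eq0 eq_sym t1 -sum_w' sumr_ge0 // => k _; apply: w0.
have t0 : 0 <= t := w0 ord_max.
have S' : S (fun i => \sum_k (w' k / (1 - t)) * p (widen_ord (leqnSn n) k) i).
  apply: IH => [k|k|]; [exact: Sp | exact: divr_ge0 (w0 _) (ltW t'0) |].
  by rewrite -mulr_suml sum_w' mulfV ?gt_eqF.
have := cS _ _ (1 - t) S' (Sp ord_max) ltac:(apply/andP; split; lra).
congr S; apply: funext => i; rewrite big_ord_recr /= mulr_sumr subKr -/t.
congr (_ + _); apply: eq_bigr => k _.
by rewrite mulrA mulrCA mulfV ?gt_eqF ?mulr1.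
Qed.

Lemma class_I_uniform S : convex_source S -> class_I S -> S U.
Proof.
move=> cS [n [p [w [Sp [w0 [w1 wU]]]]]].
have := convex_source_sum cS Sp w0 w1.
by rewrite (_ : (fun i => _) = U) //; apply: funext.
Qed.

Lemma eps_IT_ge_mutual_info S Q P : source_set S -> mechanism Q -> S P ->
  mutual_info P Q <= eps_IT S Q.
Proof.
move=> [_ Sd] mQ SP; apply: ub_le_sup; last by exists P.
by exists (ln M%:R) => _ [P' SP' <-]; apply: mutual_info_le_ln => //; apply: Sd.
Qed.

Lemma eps_IT_eq S Q v P : source_set S -> mechanism Q ->
  (forall P', S P' -> mutual_info P' Q <= v) -> S P -> mutual_info P Q = v -> eps_IT S Q = v.
Proof.
move=> sS mQ ub SP IPv; apply/le_anti/andP; split; last by rewrite -IPv eps_IT_ge_mutual_info.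
by apply: ge_sup; [exists (mutual_info P Q), P | move=> _ [P' SP' <-]; apply: ub].
Qed.

Lemma valid_diag_avg S D Q : (0 < M)%N -> S U -> valid S D Q ->
  1 - D <= \sum_i U i * Q i i.
Proof.
move=> M0 SU [_ /(_ U SU)]; have [_ U1] := uniform_distrP R M0.
under eq_bigr do rewrite /diag_distortion mulrBr mulr1.
by rewrite sumrB U1; lra.
Qed.

End SourceSets.

Section SymmetricMechanism.
Variables (R : realType) (M : nat).
Implicit Types (P : 'I_M -> R) (S : set ('I_M -> R)) (Q : 'M[R]_M) (a b : R).
Local Notation U := (uniform_distr R (M:=M)).

Definition sym_mx a b : 'M[R]_M := \matrix_(i, j) if i == j then a else b.

Definition sym_mx_leakage a b := ln M%:R + a * ln a + (M%:R - 1) * (b * ln b).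

Lemma sum_if_eq (f : R -> R) (i : 'I_M) a b :
  \sum_j f (if j == i then a else b) = f a + (M%:R - 1) * f b.
Proof.
rewrite (bigD1 i) //= eqxx; congr (_ + _).
rewrite (eq_bigr (fun _ => f b)) => [|j /negbTE -> //].
rewrite sumr_const cardC1 card_ord -[f b *+ _]mulr_natl; congr (_ * _).
by rewrite -[in RHS](prednK (leq_ltn_trans (leq0n i) (ltn_ord i))) -natr1 addrK.
Qed.

Lemma sym_mx_mechanism a b : 0 <= a -> 0 <= b -> a + (M%:R - 1) * b = 1 ->
  mechanism (sym_mx a b).
Proof.
move=> a0 b0 ab1; split=> [i j|i]; first by rewrite mxE; case: eqP.
by rewrite -ab1 -(sum_if_eq id i); apply: eq_bigr => j _; rewrite mxE eq_sym.
Qed.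

Lemma sym_mx_row_entropy a b i :
  \sum_j sym_mx a b i j * ln (sym_mx a b i j) = a * ln a + (M%:R - 1) * (b * ln b).
Proof.
rewrite -(sum_if_eq (fun x => x * ln x) i).
by apply: eq_bigr => j _; rewrite mxE eq_sym.
Qed.

Lemma mutual_info_sym_mx_le P a b : is_distr P -> 0 <= a -> 0 <= b ->
  a + (M%:R - 1) * b = 1 -> mutual_info P (sym_mx a b) <= sym_mx_leakage a b.
Proof.
move=> dP a0 b0 ab1; have mQ := sym_mx_mechanism a0 b0 ab1.
rewrite mutual_info_entropyE // /sym_mx_leakage.
under eq_bigr do rewrite sym_mx_row_entropy.
rewrite -big_distrl /=; case: (dP) => _ ->; rewrite mul1r.
have := entropy_le_ln_card (fun j => out_marg_ge0 j dP mQ) (sum_out_marg dP mQ).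
by rewrite card_ord; lra.
Qed.

Lemma mutual_info_uniform_sym_mx a b : (0 < M)%N -> 0 <= a -> 0 <= b ->
  a + (M%:R - 1) * b = 1 -> mutual_info U (sym_mx a b) = sym_mx_leakage a b.
Proof.
move=> M0 a0 b0 ab1; have mQ := sym_mx_mechanism a0 b0 ab1.
have dU := uniform_distrP R M0.
have Mp : 0 < (M%:R : R) by rewrite ltr0n.
have marg j : out_marg U (sym_mx a b) j = M%:R^-1.
  rewrite /out_marg -mulr_sumr -[RHS]mulr1 -ab1 -(sum_if_eq id j).
  by congr (_ * _); apply: eq_bigr => i _; rewrite mxE.
rewrite mutual_info_entropyE // /sym_mx_leakage.
under eq_bigr do rewrite sym_mx_row_entropy.
under [X in _ - X]eq_bigr do rewrite marg.
rewrite -big_distrl /= !sumr_const card_ord -[_ *+ M]mulr_natr mulVf ?gt_eqF //.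
by rewrite lnV ?posrE // -[_ *+ M]mulr_natr; field; rewrite gt_eqF.
Qed.

Lemma valid_sym_mx S D a b : source_set S -> 0 <= a -> 0 <= b ->
  a + (M%:R - 1) * b = 1 -> 1 - a <= D -> valid S D (sym_mx a b).
Proof.
move=> [_ Sd] a0 b0 ab1 aD; split=> [|P SP]; first exact: sym_mx_mechanism.
under eq_bigr do rewrite /diag_distortion mxE eqxx.
by rewrite -big_distrl /=; case: (Sd P SP) => _ ->; rewrite mul1r.
Qed.

Lemma eps_IT_sym_mx S a b : (0 < M)%N -> source_set S -> S U -> 0 <= a -> 0 <= b ->
  a + (M%:R - 1) * b = 1 -> eps_IT S (sym_mx a b) = sym_mx_leakage a b.
Proof.
move=> M0 sS SU a0 b0 ab1; apply: (eps_IT_eq sS (sym_mx_mechanism a0 b0 ab1) _ SU).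
  by move=> P SP; apply: mutual_info_sym_mx_le => //; case: sS => _; apply.
exact: mutual_info_uniform_sym_mx.
Qed.

Lemma fano_uniform Q a b : (0 < M)%N -> mechanism Q -> 0 < a -> 0 <= b ->
  a + (M%:R - 1) * b = 1 -> (forall i j, i != j -> 0 < Q i j -> 0 < b) ->
  ln M%:R + ln b + (\sum_i U i * Q i i) * (ln a - ln b) <= mutual_info U Q.
Proof.
move=> M0 mQ a0 b0 ab1 supp; have dU := uniform_distrP R M0.
have Mp : 0 < (M%:R : R) by rewrite ltr0n.
pose c := sym_mx a b.
have c0 i j : 0 <= c i j by rewrite mxE; case: eqP => _ //; exact: ltW.
have c_col j : \sum_i c i j = 1.
  by rewrite -ab1 -(sum_if_eq id j); apply: eq_bigr => i _; rewrite mxE.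
have c_pos i j : 0 < U i * Q i j -> 0 < c i j.
  move=> /lt0r_neq0/(joint_gt0 dU mQ)[_ Qp _].
  by rewrite mxE; case: eqVneq => [_ //|/supp]; apply.
apply: le_trans (mutual_info_ge_cross dU mQ c0 c_col c_pos).
have term i j : U i * Q i j * ln (c i j / U i) =
    U i * Q i j * (ln M%:R + ln b) + (if j == i then U i * Q i j * (ln a - ln b) else 0).
  have [->|ne] := eqVneq (U i * Q i j) 0; first by rewrite !mul0r; case: eqP; rewrite ?addr0.
  have [Up Qp _] := joint_gt0 dU mQ ne.
  have := c_pos i j (mulr_gt0 Up Qp); rewrite /c mxE eq_sym => cp.
  rewrite ln_div ?posrE // lnV ?posrE // opprK.
  by case: eqP cp => _ cp; rewrite ?addr0; ring.
under [X in _ <= X]eq_bigr do under eq_bigr do rewrite term.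
under [X in _ <= X]eq_bigr do rewrite big_split -big_distrl -big_mkcond big_pred1_eq /=.
by rewrite big_split -big_distrl -big_distrl /= sum_joint //= mul1r.
Qed.

Lemma sym_mx_leakage_le_mutual_info Q a b : (0 < M)%N -> mechanism Q ->
  0 <= b <= a -> a + (M%:R - 1) * b = 1 -> a <= \sum_i U i * Q i i ->
  sym_mx_leakage a b <= mutual_info U Q.
Proof.
move=> M0 mQ /andP[b0 ba] ab1 a_diag.
have a1_of_b0 : b = 0 -> a = 1 by move=> b_eq0; rewrite -ab1 b_eq0 mulr0 addr0.
have a0 : 0 < a.
  have [b_eq0|b_neq0] := eqVneq b 0; first by rewrite a1_of_b0.
  by apply: lt_le_trans ba; rewrite lt0r b_neq0.
have ln_ba : ln b <= ln a.
  have [b_eq0|b_neq0] := eqVneq b 0; first by rewrite b_eq0 a1_of_b0 // ln0 ?ln1.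
  by rewrite ler_ln ?posrE // lt0r b_neq0.
have supp i j : i != j -> 0 < Q i j -> 0 < b.
  move=> ij Qij; rewrite lt0r b0 andbT; apply: contraTneq Qij => /a1_of_b0 a1.
  rewrite a1 in a_diag.
  by rewrite (mechanism_offdiag_eq0 mQ (diag_avg_ge1 i mQ a_diag)) 1?eq_sym // ltxx.
apply: le_trans (fano_uniform M0 mQ a0 b0 ab1 supp).
have : a * (ln a - ln b) <= (\sum_i U i * Q i i) * (ln a - ln b).
  by apply: ler_wpM2r; rewrite ?subr_ge0.
have kb : (M%:R - 1) * b = 1 - a by lra.
by rewrite /sym_mx_leakage mulrA kb; lra.
Qed.

End SymmetricMechanism.

Section OptimalLeakage.
Variables (R : realType) (M : nat) (S : set ('I_M -> R)) (D : R).
Hypotheses (M2 : (2 <= M)%N) (sS : source_set S) (SU : S (uniform_distr R (M:=M))).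
Hypothesis D0 : 0 <= D.

Lemma sym_mx_leakage_binary_entropy :
  sym_mx_leakage M (1 - D) (D / (M%:R - 1)) = ln M%:R - binary_entropy D - D * ln (M%:R - 1).
Proof.
have M1 : 0 < (M%:R : R) - 1 by rewrite subr_gt0 ltr1n.
rewrite /sym_mx_leakage /binary_entropy mulrA mulrCA mulfV ?gt_eqF // mulr1.
have [->|Dne] := eqVneq D 0; first by rewrite !mul0r; ring.
have Dp : 0 < D by rewrite lt0r Dne.
by rewrite ln_div ?posrE //; ring.
Qed.

Lemma leakage_below_threshold : D < (M%:R - 1) / M%:R ->
  let V := ln M%:R - binary_entropy D - D * ln (M%:R - 1) in
  (exists Q, valid S D Q /\ eps_IT S Q = V) /\ (forall Q, valid S D Q -> V <= eps_IT S Q).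
Proof.
move=> hD V; have M0 : (0 < M)%N := ltnW M2.
have M1 : 0 < (M%:R : R) - 1 by rewrite subr_gt0 ltr1n.
set b := D / (M%:R - 1).
have ab1 : 1 - D + (M%:R - 1) * b = 1 by rewrite /b mulrCA mulfV ?gt_eqF // mulr1 subrK.
have b0 : 0 <= b := divr_ge0 D0 (ltW M1).
have Mp : 0 < (M%:R : R) by rewrite ltr0n.
have ba : b <= 1 - D by move: hD; rewrite ler_pdivrMr // ltr_pdivlMr //; nra.
have a0 : 0 <= 1 - D := le_trans b0 ba.
rewrite /V -sym_mx_leakage_binary_entropy -/b; split.
  exists (sym_mx M (1 - D) b); split; last exact: eps_IT_sym_mx.
  by apply: valid_sym_mx; rewrite ?subKr.
move=> Q vQ; have [mQ _] := vQ; apply: le_trans (eps_IT_ge_mutual_info sS mQ SU).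
by apply: sym_mx_leakage_le_mutual_info; rewrite ?b0 ?ba // (valid_diag_avg M0 SU vQ).
Qed.

Lemma leakage_above_threshold : (M%:R - 1) / M%:R <= D ->
  (exists Q, valid S D Q /\ eps_IT S Q = 0) /\ (forall Q, valid S D Q -> 0 <= eps_IT S Q).
Proof.
move=> hD; have M0 : (0 < M)%N := ltnW M2.
have Mp : 0 < (M%:R : R) by rewrite ltr0n.
have u0 : 0 <= (M%:R : R)^-1 by rewrite invr_ge0 ltW.
have u1 : M%:R^-1 + (M%:R - 1) * M%:R^-1 = 1 :> R by field; rewrite gt_eqF.
have leak0 : sym_mx_leakage M M%:R^-1 M%:R^-1 = 0 :> R.
  by rewrite /sym_mx_leakage lnV ?posrE //; field; rewrite gt_eqF.
split.
  exists (sym_mx M M%:R^-1 M%:R^-1); rewrite -leak0; split.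
    by apply: valid_sym_mx => //; rewrite mulrBl mulfV ?gt_eqF // div1r in hD.
  exact: eps_IT_sym_mx.
move=> Q vQ; have [mQ _] := vQ; apply: le_trans (eps_IT_ge_mutual_info sS mQ SU).
exact: mutual_info_ge0 (uniform_distrP R M0) mQ.
Qed.

End OptimalLeakage.

Theorem lemma3 (R : realType) (M : nat) (S : set ('I_M -> R)) (D : R) :
  (2 <= M)%N ->
  source_set S -> convex_source S -> class_I S ->
  0 <= D <= 1 ->
  let V := if D < (M%:R - 1) / M%:R
           then ln M%:R - binary_entropy D - D * ln (M%:R - 1)
           else 0 in
  (exists Q : 'M[R]_M, valid S D Q /\ eps_IT S Q = V) /\
  (forall Q : 'M[R]_M, valid S D Q -> V <= eps_IT S Q).
Proof.
move=> M2 sS cS cIS /andP[D0 _] V.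
have SU := class_I_uniform cS cIS.
rewrite /V; case: ltP => hD.
  exact: leakage_below_threshold.
exact: leakage_above_threshold.
Qed.
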